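(* Let $G$ be a finite strongly connected directed graph whose edges carry weight vectors in $\mathbb{Q}^k$, and let $(t_1,\dots,t_k)$ be a vector. If for every $\alpha>0$ there exists a finite cyclic path in $G$ whose average weight is at least $t_i-\alpha$ in every dimension $i$, then there exists an infinite path in $G$ whose mean-payoff vector is at least $(t_1,\dots,t_k)$ in every coordinate.
   Context: A cyclic path is a finite path starting and ending at the same vertex; its average weight in dimension $i$ is the sum of the $i$-th weight coordinates of its edges divided by its length. The mean-payoff vector of an infinite path $e_1e_2\dots$ has $i$-th coordinate $\liminf_{t\to\infty}\frac1t\sum_{s=1}^t w_i(e_s)$. *)

From HB Require Import structures.
From mathcomp Require Import all_boot all_order all_algebra.
From mathcomp Require Import all_classical all_reals.
From mathcomp Require Import topology normedtype sequences.
Set Implicit Arguments. Unset Strict Implicit. Unset Printing Implicit Defensive.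
Import Order.TTheory GRing.Theory Num.Theory.
Local Open Scope ring_scope.

(* A finite multi-digraph: vertices V, edges E, with source/target maps.
   Edge weights are vectors in Q^k, given as w : E -> 'I_k -> rat. *)

Fixpoint is_path_from (V E : finType) (src dst : E -> V) (u v : V) (s : seq E) : bool :=
  match s with
  | [::] => u == v
  | e :: s' => (src e == u) && is_path_from src dst (dst e) v s'
  end.

Definition strongly_connected (V E : finType) (src dst : E -> V) : Prop :=
  forall u v : V, exists s : seq E, is_path_from src dst u v s.

Definition is_cycle (V E : finType) (src dst : E -> V) (c : seq E) : Prop :=
  (0 < size c)%N /\ exists u : V, is_path_from src dst u u c.

Definition avg_weight (E : finType) (k : nat) (w : E -> 'I_k -> rat)
  (c : seq E) (i : 'I_k) : rat :=
  (\sum_(e <- c) w e i) / (size c)%:R.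

Definition is_inf_path (V E : finType) (src dst : E -> V) (p : nat -> E) : Prop :=
  forall n, dst (p n) = src (p n.+1).

(* mean-payoff in dimension i: liminf_{t->oo} (1/t) sum_{s=1}^t w_i(e_s),
   taken in the extended reals; here index n corresponds to t = n+1 *)
Definition mean_payoff (R : realType) (E : finType) (k : nat)
  (w : E -> 'I_k -> rat) (p : nat -> E) (i : 'I_k) : \bar R :=
  limn_einf (fun n : nat =>
    ((ratr (\sum_(s < n.+1) w (p s) i) : R) / n.+1%:R)%:E).

From HB Require Import structures.
From mathcomp Require Import all_boot all_order all_algebra.
From mathcomp Require Import all_classical all_reals.
From mathcomp Require Import topology normedtype sequences ereal.
From mathcomp Require Import zify lra.
Import Order.TTheory GRing.Theory Num.Theory.
Set Implicit Arguments. Unset Strict Implicit.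

(* For every n pick a cycle whose averages are all above t - 1/(n+1).  Finitely
   many vertices means infinitely many of these cycles share a base vertex, so
   after passing to a subsequence all cycles C_n are closed at one vertex v.  The infinite path is the
   concatenation whose J-th block is C_n for the largest n <= J with
   (n+1) |C_n| <= J.  Along the blocks n tends to infinity, hence eventually
   each block has averages above t - eps and is at most eps times as long as
   the prefix before it, so cutting the path inside a block moves the running
   average by O(eps) only. *)

Section Blocks.
Variables (E : Type) (D : nat -> seq E).

Definition blocks_prefix N := flatten (mkseq D N).

Lemma blocks_prefixS N : blocks_prefix N.+1 = blocks_prefix N ++ D N.
Proof. by rewrite /blocks_prefix mkseqS flatten_rcons. Qed.

Lemma blocks_prefix_ext N M : N <= M ->
  exists s, blocks_prefix M = blocks_prefix N ++ s.
Proof.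
move=> /subnK <-; elim: (M - N) => [|d [s defM]]; first by exists [::]; rewrite cats0.
by exists (s ++ D (d + N)); rewrite addSn blocks_prefixS defM catA.
Qed.

Hypothesis D_neq0 : forall J, 0 < size (D J).

Lemma size_blocks_prefix_ge N : N <= size (blocks_prefix N).
Proof.
elim: N => // N IH; rewrite blocks_prefixS size_cat -addn1.
exact: leq_add IH (D_neq0 N).
Qed.

Variable e0 : E.

Definition concat_blocks x := nth e0 (blocks_prefix x.+1) x.

Lemma concat_blocksE N x : x < size (blocks_prefix N) ->
  concat_blocks x = nth e0 (blocks_prefix N) x.
Proof.
move=> xN; have x1 : x < size (blocks_prefix x.+1).
  exact: leq_trans (size_blocks_prefix_ge _).
rewrite /concat_blocks.
by case: (leqP N x.+1) => [|/ltnW] /blocks_prefix_ext[s ->]; rewrite nth_cat ?xN ?x1.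
Qed.

Lemma concat_blocks_shift J s : s < size (D J) ->
  concat_blocks (size (blocks_prefix J) + s) = nth e0 (D J) s.
Proof.
move=> sJ; have lt_sJ : size (blocks_prefix J) + s < size (blocks_prefix J.+1).
  by rewrite blocks_prefixS size_cat ltn_add2l.
by rewrite (concat_blocksE lt_sJ) blocks_prefixS nth_cat ltnNge leq_addr /= addKn.
Qed.

Lemma sum_concat_blocks (R : nmodType) (f : E -> R) J :
  (\sum_(size (blocks_prefix J) <= s < size (blocks_prefix J.+1)) f (concat_blocks s)
   = \sum_(e <- D J) f e)%R.
Proof.
rewrite blocks_prefixS size_cat -{1}[size (blocks_prefix J)]add0n big_addn addKn.
rewrite (big_nth e0) big_mkord [RHS]big_mkord; apply: eq_bigr => s _.
by rewrite addnC concat_blocks_shift.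
Qed.

End Blocks.

Section ClosedPaths.
Variables (V E : finType) (src dst : E -> V).

Lemma is_path_from_cat u v x s1 s2 :
  is_path_from src dst u v s1 -> is_path_from src dst v x s2 ->
  is_path_from src dst u x (s1 ++ s2).
Proof.
elim: s1 u => [|e s1 IH] u /=; first by move=> /eqP ->.
by move=> /andP[-> p1] p2; apply: IH.
Qed.

Lemma is_path_from_link u v s e0 i : is_path_from src dst u v s -> i.+1 < size s ->
  dst (nth e0 s i) = src (nth e0 s i.+1).
Proof.
elim: s u i => [|e s IH] u [|i] //=; last by move=> /andP[_ p] ?; apply: IH p _.
by case: s {IH} => //= e' s /andP[_ /andP[/eqP -> _]].
Qed.

Lemma is_path_from_blocks_prefix v (D : nat -> seq E) N :
  (forall J, is_path_from src dst v v (D J)) ->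
  is_path_from src dst v v (blocks_prefix D N).
Proof.
move=> closedD; elim: N => [|N IH]; first exact: eqxx.
by rewrite blocks_prefixS; apply: is_path_from_cat IH (closedD N).
Qed.

Lemma is_inf_path_concat_blocks v (D : nat -> seq E) e0 :
  (forall J, 0 < size (D J)) -> (forall J, is_path_from src dst v v (D J)) ->
  is_inf_path src dst (concat_blocks D e0).
Proof.
move=> D_neq0 closedD x.
have x2 : x.+1 < size (blocks_prefix D x.+2).
  exact: leq_trans (size_blocks_prefix_ge D_neq0 _).
rewrite (concat_blocksE D_neq0 e0 x2) (concat_blocksE D_neq0 e0 (ltnW x2)).
exact: is_path_from_link (is_path_from_blocks_prefix _ closedD) x2.
Qed.

End ClosedPaths.

Lemma increasing_bracket (b : nat -> nat) J0 T :
  (forall J, b J < b J.+1) -> b J0 <= T -> exists2 J, J0 <= J & b J <= T < b J.+1.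
Proof.
move=> b_incr; elim: T => [|T IH] bJ0T.
  by exists J0; rewrite // bJ0T (leq_ltn_trans (leq0n _) (b_incr J0)).
case: (leqP (b J0) T) => [/IH [J J0J /andP[bJT T_lt]] | T_lt]; last first.
  by exists J0; rewrite // bJ0T (leq_ltn_trans T_lt (b_incr J0)).
have := b_incr J.+1; case: (ltnP T.+1 (b J.+1)) => T1_lt.
  by exists J; rewrite // T1_lt leqW.
by exists J.+1; [exact: leqW | lia].
Qed.

Local Open Scope ring_scope.

Lemma le_limn_einf_EFin (R : realType) (u : nat -> R) (a : R) :
  (forall e, 0 < e -> exists N, forall n, (N <= n)%N -> a - e <= u n) ->
  (a%:E <= limn_einf (fun n => (u n)%:E))%E.
Proof.
move=> ev_ge; rewrite limn_einf_lim; apply/lee_subgt0Pr => e e_gt0.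
have [N uN] := ev_ge e e_gt0.
apply: lime_ge; first exact: is_cvg_einfs.
exists N => // n /= Nn; apply: le_ereal_inf_tmp => _ [k /= nk <-].
by rewrite -EFinB lee_fin uN // (leq_trans Nn nk).
Qed.

Section BlockAverage.
Variables (R : realType) (x : nat -> R) (b : nat -> nat) (a m : R).
Hypothesis x_ge : forall s, m <= x s.
Hypothesis b_incr : forall J, (b J < b J.+1)%N.

Local Notation S T := (\sum_(0 <= s < T) x s).

Lemma sum_blocks_ge eps J0 J :
  (forall J, (J0 <= J)%N ->
     (a - eps) * ((b J.+1)%:R - (b J)%:R) <= \sum_(b J <= s < b J.+1) x s) ->
  (J0 <= J)%N -> (a - eps) * ((b J)%:R - (b J0)%:R) + S (b J0) <= S (b J).
Proof.
move=> good /subnK <-; elim: (J - J0)%N => [|d IH]; first by rewrite subrr mulr0 add0r.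
have := good _ (leq_addl d J0).
rewrite addSn (big_cat_nat (leq0n _) (ltnW (b_incr _))) /=.
move: IH; set u := (b (d + J0))%:R; set v := (b (d + J0).+1)%:R.
by rewrite !mulrBr; lra.
Qed.

Hypothesis blocks_good : forall eps, 0 < eps -> exists J0, forall J, (J0 <= J)%N ->
  (a - eps) * ((b J.+1)%:R - (b J)%:R) <= \sum_(b J <= s < b J.+1) x s /\
  (b J.+1)%:R - (b J)%:R <= eps * (b J)%:R.

Lemma sum_ge_eventually eta : 0 < eta ->
  exists T0, forall T, (T0 <= T)%N -> (a - eta) * T%:R <= S T.
Proof.
move=> eta_gt0; set c := 2 + `|a| + `|m|.
have c_gt0 : 0 < c by rewrite /c; have := normr_ge0 a; have := normr_ge0 m; lra.
pose eps := eta / c; have eps_gt0 : 0 < eps by exact: divr_gt0.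
have eta_eps : eta = eps * c by rewrite /eps divfK ?gt_eqF.
have [J0 good] := blocks_good eps_gt0.
(* [K] absorbs the blocks before [J0], about which nothing is known. *)
pose K := (a - eps) * (b J0)%:R - S (b J0).
exists (maxn (b J0) (Num.truncn (K / eps)).+1) => T; rewrite geq_max => /andP[bJ0T KT].
have [J J0J /andP[bJT T_lt]] := increasing_bracket b_incr bJ0T.
have head := sum_blocks_ge (fun J h => (good J h).1) J0J.
pose r : R := T%:R - (b J)%:R.
have tail : S (b J) + m * r <= S T.
  rewrite (big_cat_nat (leq0n _) bJT) /= lerD2l.
  have : \sum_(b J <= s < T) m <= \sum_(b J <= s < T) x s.
    by apply: ler_sum_nat => s _; exact: x_ge.
  by rewrite sumr_const_nat -mulr_natr natrB // mulrC.
have r_ge0 : 0 <= r by rewrite subr_ge0 ler_nat.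
have r_small : r <= eps * T%:R.
  apply: le_trans (ler_wpM2l (ltW eps_gt0) (_ : (b J)%:R <= T%:R)); last by rewrite ler_nat.
  apply: le_trans (good J J0J).2; rewrite lerD2r ler_nat; exact: ltnW.
have K_small : K <= eps * T%:R.
  rewrite mulrC -ler_pdivrMr //; apply: ltW; apply: lt_le_trans (truncnS_gt _) _.
  by rewrite ler_nat.
have a_r : a * r <= `|a| * (eps * T%:R).
  by apply: le_trans (ler_wpM2l (normr_ge0 a) r_small); rewrite ler_wpM2r // ler_norm.
have m_r : - `|m| * (eps * T%:R) <= m * r.
  rewrite mulNr lerNl -mulNr; apply: le_trans (ler_wpM2l (normr_ge0 m) r_small).
  by rewrite ler_wpM2r // -normrN ler_norm.
have eps_r : 0 <= eps * r by apply: mulr_ge0 (ltW eps_gt0) r_ge0.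
move: head tail K_small a_r m_r eps_r; rewrite eta_eps /c /r /K; lra.
Qed.

Lemma limn_einf_average_ge :
  (a%:E <= limn_einf (fun n => ((\sum_(s < n.+1) x s) / n.+1%:R)%:E))%E.
Proof.
apply: le_limn_einf_EFin => eta /sum_ge_eventually[T0 ST].
by exists T0 => n T0n; rewrite ler_pdivlMr // -(big_mkord xpredT x) ST // leqW.
Qed.

End BlockAverage.

(* Defaults to [0] when no index qualifies. *)
Definition short_index (len : nat -> nat) J := (\max_(n < J.+1 | n.+1 * len n <= J) n)%N.

Lemma short_index_ge (len : nat -> nat) N J :
  (N <= J)%N -> (N.+1 * len N <= J)%N -> (N <= short_index len J)%N.
Proof.
move=> NJ shortN; rewrite -ltnS in NJ.
exact: (@leq_bigmax_cond _ (fun n : 'I_J.+1 => n.+1 * len n <= J)%N _ (Ordinal NJ)).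
Qed.

Lemma short_index_short (len : nat -> nat) N J :
  (N <= J)%N -> (N.+1 * len N <= J)%N ->
  ((short_index len J).+1 * len (short_index len J) <= J)%N.
Proof.
move=> NJ shortN; rewrite -ltnS in NJ.
rewrite /short_index (bigop.bigmax_eq_arg (Ordinal NJ)) //.
by case: arg_maxnP.
Qed.

Section ShortCycleConcatenation.
Variables (R : realType) (E : Type) (e0 : E) (C : nat -> seq E) (f : E -> R) (a m : R).
Hypothesis C_neq0 : forall n, (0 < size (C n))%N.
Hypothesis C_avg : forall n, (a - n.+1%:R^-1) * (size (C n))%:R <= \sum_(e <- C n) f e.
Hypothesis f_ge : forall e, m <= f e.

Definition short_cycle J := C (short_index (fun n => size (C n)) J).

Lemma limn_einf_short_cycles_ge :
  (a%:E <= limn_einf (fun n =>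
     ((\sum_(s < n.+1) f (concat_blocks short_cycle e0 s)) / n.+1%:R)%:E))%E.
Proof.
have D_neq0 J : (0 < size (short_cycle J))%N by exact: C_neq0.
pose b J := size (blocks_prefix short_cycle J).
have block_len J : (b J.+1)%:R - (b J)%:R = (size (short_cycle J))%:R :> R.
  by rewrite /b blocks_prefixS size_cat natrD addrAC subrr add0r.
apply: (limn_einf_average_ge (x := f \o concat_blocks short_cycle e0) (m := m) (b := b)).
- by move=> s; exact: f_ge.
- by move=> J; rewrite /b blocks_prefixS size_cat -addn1 leq_add2l.
move=> eps eps_gt0.
pose N := Num.truncn eps^-1.
exists (N + N.+1 * size (C N))%N => J J0J.
have [NJ shortN] : (N <= J)%N /\ (N.+1 * size (C N) <= J)%N by split; lia.
pose n := short_index (fun n => size (C n)) J.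
have Nn : (N <= n)%N by exact: short_index_ge.
have short_n : (n.+1 * size (C n) <= J)%N by exact: short_index_short shortN.
have inv_n : n.+1%:R^-1 <= eps.
  rewrite -[leRHS]invrK lef_pV2 ?posrE ?invr_gt0 // ltW //.
  by rewrite -truncn_le_nat.
rewrite block_len sum_concat_blocks // /short_cycle -/n; split.
  by apply: le_trans (C_avg n); rewrite ler_wpM2r // lerB // lerN2.
have len_n : (size (C n))%:R <= n.+1%:R^-1 * J%:R :> R.
  by rewrite ler_pdivlMl ?ltr0Sn // -natrM ler_nat.
apply: le_trans len_n (ler_pM _ _ inv_n _) => //.
by rewrite ler_nat; exact: size_blocks_prefix_ge.
Qed.
End ShortCycleConcatenation.

Lemma recurrent_value (V : finType) (u : nat -> V) :
  exists v, forall n, exists m, (n <= m)%N /\ u m = v.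
Proof.
apply: contrapT => /forallNP never.
have /choice[N uN] : forall v, exists N, forall m, (N <= m)%N -> u m <> v.
  move=> v; have /existsNP[N uN] := never v.
  by exists N => m Nm umv; apply: uN; exists m.
exact: (uN (u (\max_v N v)%N) _ (leq_bigmax _)).
Qed.

Lemma cycles_at_common_vertex (R : realType) (V E : finType) (src dst : E -> V) (k : nat)
    (w : E -> 'I_k -> rat) (t : 'I_k -> R) :
  (forall alpha : R, 0 < alpha -> exists c : seq E, is_cycle src dst c /\
     forall i : 'I_k, t i - alpha <= ratr (avg_weight w c i)) ->
  exists v (C : nat -> seq E), [/\ forall n, (0 < size (C n))%N,
    forall n, is_path_from src dst v v (C n) &
    forall n i, (t i - n.+1%:R^-1) * (size (C n))%:R <= \sum_(e <- C n) ratr (w e i)].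
Proof.
move=> near_cycles.
have /choice[cu cuP] : forall n : nat, exists cu : seq E * V,
    [/\ (0 < size cu.1)%N, is_path_from src dst cu.2 cu.2 cu.1 &
        forall i, t i - n.+1%:R^-1 <= ratr (avg_weight w cu.1 i)].
  move=> n; have [|c [[c_neq0 [u cu]] c_avg]] := near_cycles n.+1%:R^-1.
    by rewrite invr_gt0 ltr0Sn.
  by exists (c, u).
have [v /choice[g gP]] := recurrent_value (fun n => (cu n).2).
exists v, (fun n => (cu (g n)).1); split=> [n|n|n i]; have [ng cu_v] := gP n.
- by have [] := cuP (g n).
- by have [_ + _] := cuP (g n); rewrite cu_v.
have [c_neq0 _ /(_ i)] := cuP (g n).
rewrite /avg_weight fmorph_div rmorph_nat rmorph_sum -ler_pdivlMr ?ltr0n //.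
apply: le_trans; rewrite lerD2l lerN2 lef_pV2 ?posrE ?ltr0Sn // ler_nat ltnS //.
Qed.

Theorem lemma5 (R : realType) (V E : finType) (src dst : E -> V) (k : nat)
  (w : E -> 'I_k -> rat) (t : 'I_k -> R) :
  strongly_connected src dst ->
  (forall alpha : R, 0 < alpha ->
     exists c : seq E, is_cycle src dst c /\
       forall i : 'I_k, t i - alpha <= ratr (avg_weight w c i)) ->
  exists p : nat -> E, is_inf_path src dst p /\
    forall i : 'I_k, ((t i)%:E <= mean_payoff R w p i)%E.
Proof.
move=> _ /cycles_at_common_vertex[v [C [C_neq0 C_closed C_avg]]].
have [e0 _] : exists e : E, true by case: (C 0%N) (C_neq0 0%N) => // e; exists e.
exists (concat_blocks (short_cycle C) e0); split.
  by apply: (is_inf_path_concat_blocks (v := v)) => J; [exact: C_neq0 | exact: C_closed].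
move=> i; rewrite /mean_payoff; under eq_fun do rewrite rmorph_sum.
have w_ge e : - \sum_e' `|ratr (w e' i) : R| <= ratr (w e i).
  rewrite lerNl (bigD1 e) //= -[leLHS]addr0 -normrN lerD ?ler_norm //.
  exact: sumr_ge0.
exact: limn_einf_short_cycles_ge C_neq0 (C_avg^~ i) w_ge.
Qed.
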